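(* Any non-abelian Lie superalgebra does not possess simultaneously a quadratic structure and an odd-quadratic structure.
   Context: All vector spaces are finite dimensional over an algebraically closed field $\mathbb{K}$ of characteristic zero. A Lie superalgebra is $\mathfrak{g}=\mathfrak{g}_{\bar{0}}\oplus\mathfrak{g}_{\bar{1}}$. A quadratic (resp. odd-quadratic) structure on $\mathfrak{g}$ is a non-degenerate, supersymmetric, invariant bilinear form on $\mathfrak{g}$ which is even, i.e. $B(\mathfrak{g}_{\bar{0}},\mathfrak{g}_{\bar{1}})=\{0\}$ (resp. odd, i.e. $B(\mathfrak{g}_{\bar{0}},\mathfrak{g}_{\bar{0}})=B(\mathfrak{g}_{\bar{1}},\mathfrak{g}_{\bar{1}})=\{0\}$). *)

From HB Require Import structures.
From mathcomp Require Import all_boot all_order all_algebra.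
Set Implicit Arguments. Unset Strict Implicit. Unset Printing Implicit Defensive.
Import GRing.Theory.
Local Open Scope ring_scope.

(* A finite-dimensional Lie superalgebra over K is modelled as a finite
   dimensional K-vector space V (vectType) with a Z/2-grading V = g0 (+) g1
   (two subspaces in direct sum spanning V), parities being booleans
   (false = even, true = odd), and a bracket br : V -> V -> V. *)

Section LieSuper.
Variables (K : fieldType) (V : vectType K).

Definition psign (a b : bool) : K := (-1) ^+ (a && b).

Definition gpart (g0 g1 : {vspace V}) (b : bool) : {vspace V} :=
  if b then g1 else g0.

Definition lie_superalgebra (g0 g1 : {vspace V}) (br : V -> V -> V) : Prop :=
  [/\ (g0 + g1 = fullv)%VS /\ (g0 :&: g1 = 0)%VS,
      (forall (c : K) (x y z : V), br (c *: x + y) z = c *: br x z + br y z) /\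
      (forall (c : K) (x y z : V), br x (c *: y + z) = c *: br x y + br x z),
      (forall (a b : bool) (x y : V), x \in gpart g0 g1 a -> y \in gpart g0 g1 b ->
         br x y \in gpart g0 g1 (a (+) b)),
      (forall (a b : bool) (x y : V), x \in gpart g0 g1 a -> y \in gpart g0 g1 b ->
         br x y = - (psign a b *: br y x)) &
      (forall (a b c : bool) (x y z : V),
         x \in gpart g0 g1 a -> y \in gpart g0 g1 b -> z \in gpart g0 g1 c ->
         psign a c *: br x (br y z) + psign b a *: br y (br z x)
           + psign c b *: br z (br x y) = 0)].

Definition abelian_bracket (br : V -> V -> V) : Prop := forall x y : V, br x y = 0.

Definition nondeg_supersym_invariant_form (g0 g1 : {vspace V})
    (br : V -> V -> V) (B : V -> V -> K) : Prop :=
  [/\ (forall (c : K) (x y z : V), B (c *: x + y) z = c * B x z + B y z),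
      (forall (c : K) (x y z : V), B x (c *: y + z) = c * B x y + B x z),
      (forall x : V, (forall y : V, B x y = 0) -> x = 0),
      (forall (a b : bool) (x y : V), x \in gpart g0 g1 a -> y \in gpart g0 g1 b ->
         B x y = psign a b * B y x) &
      (forall x y z : V, B (br x y) z = B x (br y z))].

Definition quadratic_structure g0 g1 br (B : V -> V -> K) : Prop :=
  nondeg_supersym_invariant_form g0 g1 br B /\
  (forall x y : V, x \in g0 -> y \in g1 -> B x y = 0).

Definition odd_quadratic_structure g0 g1 br (B : V -> V -> K) : Prop :=
  nondeg_supersym_invariant_form g0 g1 br B /\
  (forall x y : V, x \in g0 -> y \in g0 -> B x y = 0) /\
  (forall x y : V, x \in g1 -> y \in g1 -> B x y = 0).

End LieSuper.

From HB Require Import structures.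
From mathcomp Require Import all_boot all_order all_algebra.
Set Implicit Arguments. Unset Strict Implicit. Unset Printing Implicit Defensive.
Import GRing.Theory.
Local Open Scope ring_scope.

(* Let B be the even and C the odd form. Non-degeneracy of B yields a linear
   injective map D with B(Dx, y) = C(x, y); it is odd because C is odd and B is
   even, and invariance of both forms gives D[x,y] = [Dx,y]. Combined with
   super skew-symmetry this gives D[x,y] = (-1)^|x| [x,Dy] for homogeneous x, y.
   Computing D^2[x,y] in the two possible orders then yields
   D^2[x,y] = (-1)^(|x|+1) (-1)^|x| D^2[x,y] = -D^2[x,y], so [x,y] = 0 in
   characteristic different from 2. *)

Section Forms.
Variables (K : fieldType) (V : vectType K).

Section LeftLinear.
Variable B : V -> V -> K.
Hypothesis BL : forall (c : K) (x y z : V), B (c *: x + y) z = c * B x z + B y z.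

Lemma formDl x y z : B (x + y) z = B x z + B y z.
Proof. by have := BL 1 x y z; rewrite scale1r mul1r. Qed.

Lemma form0l z : B 0 z = 0.
Proof. by apply: (@addrI _ (B 0 z)); rewrite -formDl !addr0. Qed.

Lemma formZl c x z : B (c *: x) z = c * B x z.
Proof. by rewrite -[c *: x]addr0 BL form0l addr0. Qed.

Lemma form_suml n (c : 'I_n -> K) (f : 'I_n -> V) z :
  B (\sum_i c i *: f i) z = \sum_i c i * B (f i) z.
Proof.
apply: (big_rec2 (fun s t => B t z = s)); first exact: form0l.
by move=> i y1 y2 _ <-; rewrite BL.
Qed.

Hypothesis Bnd : forall x : V, (forall y : V, B x y = 0) -> x = 0.

Lemma form_nondeg_inj u v : (forall z, B u z = B v z) -> u = v.
Proof.
move=> Buv; apply/eqP; rewrite -subr_eq0; apply/eqP/Bnd => z.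
by rewrite formDl -scaleN1r formZl Buv mulN1r addrN.
Qed.

End LeftLinear.

Lemma form_sumr (B : V -> V -> K)
    (BR : forall (c : K) (x y z : V), B x (c *: y + z) = c * B x y + B x z)
    n (c : 'I_n -> K) (f : 'I_n -> V) x :
  B x (\sum_i c i *: f i) = \sum_i c i * B x (f i).
Proof. exact: (@form_suml (fun y x => B x y)). Qed.

Lemma formDr (B : V -> V -> K)
    (BR : forall (c : K) (x y z : V), B x (c *: y + z) = c * B x y + B x z)
    x y z : B x (y + z) = B x y + B x z.
Proof. exact: (@formDl (fun y x => B x y)). Qed.

(* [form_repr B C x] solves [B (form_repr B C x) = C x] in coordinates of a
   basis, through the inverse Gram matrix of B. *)
Definition form_repr (B C : V -> V -> K) (x : V) : V :=
  let e := vbasis (fullv : {vspace V}) in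
  let M : 'M[K]_(\dim (fullv : {vspace V})) := \matrix_(i, j) B e`_i e`_j in
  \sum_i ((\row_j C x e`_j) *m invmx M) 0 i *: e`_i.

Lemma form_reprE (B C : V -> V -> K) :
  (forall (c : K) (x y z : V), B (c *: x + y) z = c * B x z + B y z) ->
  (forall (c : K) (x y z : V), B x (c *: y + z) = c * B x y + B x z) ->
  (forall x : V, (forall y : V, B x y = 0) -> x = 0) ->
  (forall (c : K) (x y z : V), C x (c *: y + z) = c * C x y + C x z) ->
  forall x y, B (form_repr B C x) y = C x y.
Proof.
move=> BL BR Bnd CR x y.
set e := vbasis (fullv : {vspace V}).
set M : 'M[K]_(\dim (fullv : {vspace V})) := \matrix_(i, j) B e`_i e`_j.
have freee : free e by case/andP: (vbasisP (fullv : {vspace V})).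
have gramE (v : 'rV[K]_(\dim (fullv : {vspace V})))
    (j : 'I_(\dim (fullv : {vspace V}))) :
    B (\sum_i v 0 i *: e`_i) e`_j = (v *m M) 0 j.
  by rewrite form_suml // mxE; apply: eq_bigr => i _; rewrite mxE.
have M_unit : M \in unitmx.
  rewrite -row_free_unit -kermx_eq0; apply/rowV0P => v /sub_kermxP vM0.
  have v_comb0 : \sum_i v 0 i *: e`_i = 0.
    apply: Bnd => z; rewrite (coord_vbasis (memvf z)) form_sumr //.
    by apply: big1 => j _; rewrite gramE vM0 mxE mulr0.
  by apply/rowP => i; rewrite mxE (freeP freee _ v_comb0).
rewrite /form_repr -/e -/M (coord_vbasis (memvf y)) !form_sumr //.
by apply: eq_bigr => j _; rewrite gramE mulmxKV // mxE.
Qed.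

End Forms.

Lemma abelian_of_homogeneous (K : fieldType) (V : vectType K)
    (g0 g1 : {vspace V}) (br : V -> V -> V) :
  (g0 + g1 = fullv)%VS ->
  (forall (c : K) (x y z : V), br (c *: x + y) z = c *: br x z + br y z) ->
  (forall (c : K) (x y z : V), br x (c *: y + z) = c *: br x y + br x z) ->
  (forall (a b : bool) (x y : V), x \in gpart g0 g1 a -> y \in gpart g0 g1 b ->
     br x y = 0) ->
  abelian_bracket br.
Proof.
move=> g01 brL brR br_hom x y.
have brDl u v w : br (u + v) w = br u w + br v w.
  by have := brL 1 u v w; rewrite !scale1r.
have brDr u v w : br w (u + v) = br w u + br w v.
  by have := brR 1 w u v; rewrite !scale1r.
have /memv_addP[x0 x0g [x1 x1g ->]] : x \in (g0 + g1)%VS by rewrite g01 memvf.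
have /memv_addP[y0 y0g [y1 y1g ->]] : y \in (g0 + g1)%VS by rewrite g01 memvf.
rewrite brDl !brDr (br_hom false false x0 y0) ?(br_hom false true x0 y1) //.
by rewrite (br_hom true false x1 y0) ?(br_hom true true x1 y1) // !addr0.
Qed.

Lemma psign_compl (K : fieldType) a b :
  psign K a b * psign K (~~ b) a = (-1) ^+ a.
Proof. by case: a; case: b; rewrite /psign /= ?mulr1 ?mul1r ?expr1 ?expr0. Qed.

Section QuadraticAndOddQuadratic.
Variables (K : fieldType) (V : vectType K) (g0 g1 : {vspace V}).
Variables (br : V -> V -> V) (B C : V -> V -> K).
Hypothesis Hlie : lie_superalgebra g0 g1 br.
Hypothesis HB : quadratic_structure g0 g1 br B.
Hypothesis HC : odd_quadratic_structure g0 g1 br C.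

Local Notation g := (gpart g0 g1).
Local Notation D := (form_repr B C).

Let g01 : (g0 + g1 = fullv)%VS. Proof. by case: Hlie => -[]. Qed.
Let Hskew : forall (a b : bool) (x y : V), x \in g a -> y \in g b ->
  br x y = - (psign K a b *: br y x).
Proof. by case: Hlie. Qed.
Let BL : forall (c : K) (x y z : V), B (c *: x + y) z = c * B x z + B y z.
Proof. by case: HB => -[]. Qed.
Let BR : forall (c : K) (x y z : V), B x (c *: y + z) = c * B x y + B x z.
Proof. by case: HB => -[]. Qed.
Let Bnd : forall x : V, (forall y : V, B x y = 0) -> x = 0.
Proof. by case: HB => -[]. Qed.
Let CL : forall (c : K) (x y z : V), C (c *: x + y) z = c * C x z + C y z.
Proof. by case: HC => -[]. Qed.

Lemma gpart_decomp b v :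
  exists2 u, u \in g b & exists2 w, w \in g (~~ b) & v = u + w.
Proof.
have /memv_addP[u0 u0g [u1 u1g ->]] : v \in (g0 + g1)%VS by rewrite g01 memvf.
by case: b; [exists u1 => //; exists u0 => //; rewrite addrC | exists u0 => //; exists u1].
Qed.

Lemma even_form_cross a x y : x \in g a -> y \in g (~~ a) -> B x y = 0.
Proof.
case: HB => -[_ _ _ Bsym _] Beven; case: a => /= xg yg; last exact: Beven.
by rewrite (Bsym true false) // /psign expr0 mul1r Beven.
Qed.

Lemma even_form_orthogonal b v :
  (forall y, y \in g b -> B v y = 0) -> v \in g (~~ b).
Proof.
move=> Bv0; have [u ug [w wg vE]] := gpart_decomp b v.
suff u0 : u = 0 by rewrite vE u0 add0r.
apply: Bnd => z; have [zb zbg [zc zcg ->]] := gpart_decomp b z.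
rewrite formDr // (even_form_cross ug zcg) addr0.
have -> : u = v - w by rewrite vE addrK.
rewrite formDl // -scaleN1r formZl // Bv0 //.
by rewrite (even_form_cross wg) ?negbK // mulr0 addr0.
Qed.

Lemma form_repr_quadE x y : B (D x) y = C x y.
Proof. by case: HC => -[_ CR _ _ _] _; apply: form_reprE. Qed.

Lemma form_repr_eq0 x : D x = 0 -> x = 0.
Proof.
case: HC => -[_ _ Cnd _ _] _ Dx0.
by apply: Cnd => z; rewrite -form_repr_quadE Dx0 form0l.
Qed.

Lemma form_reprZ c x : D (c *: x) = c *: D x.
Proof.
apply: (form_nondeg_inj BL Bnd) => z.
by rewrite form_repr_quadE !formZl // form_repr_quadE.
Qed.

Lemma form_repr_odd a x : x \in g a -> D x \in g (~~ a).
Proof.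
case: HC => _ [C00 C11] xg; apply: even_form_orthogonal => y yg.
by rewrite form_repr_quadE; case: a xg yg => /=; [apply: C11 | apply: C00].
Qed.

Lemma form_repr_brl x y : D (br x y) = br (D x) y.
Proof.
case: HB => -[_ _ _ _ Binv] _; case: HC => -[_ _ _ _ Cinv] _.
apply: (form_nondeg_inj BL Bnd) => z.
by rewrite form_repr_quadE Cinv -form_repr_quadE Binv.
Qed.

Lemma form_repr_brr a b x y : x \in g a -> y \in g b ->
  D (br x y) = (-1) ^+ a *: br x (D y).
Proof.
move=> xg yg; rewrite (Hskew xg yg) -scaleNr form_reprZ form_repr_brl.
by rewrite (Hskew (form_repr_odd yg) xg) scalerN -scaleNr scalerA opprK psign_compl.
Qed.

Lemma form_repr2_bracketN a b x y : x \in g a -> y \in g b ->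
  D (D (br x y)) = - D (D (br x y)).
Proof.
move=> xg yg.
have brDD : br (D x) (D y) = (-1) ^+ a *: D (D (br x y)).
  rewrite -form_repr_brl (form_repr_brr xg yg) form_reprZ scalerA.
  by rewrite -expr2 sqrr_sign scale1r.
rewrite {1}form_repr_brl (form_repr_brr (form_repr_odd xg) yg) brDD scalerA.
by case: a {xg brDD}; rewrite /= ?expr0 ?expr1 ?mulN1r ?mul1r ?scaleN1r.
Qed.

Hypothesis two_neq0 : 2%:R != 0 :> K.

Lemma bracket_homogeneous_eq0 a b x y : x \in g a -> y \in g b -> br x y = 0.
Proof.
move=> xg yg; apply/form_repr_eq0/form_repr_eq0.
have /eqP := form_repr2_bracketN xg yg.
by rewrite -subr_eq0 opprK -mulr2n -scaler_nat scaler_eq0 (negbTE two_neq0) => /eqP.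
Qed.

End QuadraticAndOddQuadratic.

Theorem mainTheorem5 (K : closedFieldType) (charK0 : [pchar K]%R =i pred0)
  (V : vectType K) (g0 g1 : {vspace V}) (br : V -> V -> V) :
  lie_superalgebra g0 g1 br ->
  ~ abelian_bracket br ->
  ~ ((exists B : V -> V -> K, quadratic_structure g0 g1 br B) /\
     (exists B : V -> V -> K, odd_quadratic_structure g0 g1 br B)).
Proof.
move=> Hlie nonabelian [[B HB] [C HC]]; apply: nonabelian.
have two_neq0 : 2%:R != 0 :> K by rewrite ((pcharf0P K).1 charK0 2).
case: (Hlie) => -[g01 _] [brL brR] _ _ _.
apply: (abelian_of_homogeneous g01 brL brR) => a b x y.
exact: (bracket_homogeneous_eq0 Hlie HB HC two_neq0).
Qed.
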